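(* Let $(G,Y)$ be a finite $C$-group. Then the commutator subgroup $[G,G]$ is finite. Moreover, each $g\in[G,G]$ can be written in the form $g=c^{-1}\prod_{i=1}^m y_{i,1}^{k_ip_i}y_{i,1}^{a_{i,1}}y_{i,2}^{a_{i,2}}\cdots y_{i,n_i}^{a_{i,n_i}}$, where $c$ is the canonical element of $G$ and the integers $k_i,a_{i,j}$ satisfy $\sum_{j=1}^{n_i}a_{i,j}+k_ip_i=n_ip_i$, $0<a_{i,j}\le p_i$ and $0\le k_i<n_i$.
   Context: A finite $C$-group is a pair $(G,Y)$ with $Y$ a finite conjugation-invariant subset of the group $G$, $1\notin Y$, such that $G$ has a presentation with generators the elements of $Y$ and defining relations all of the form $z^{-1}yz=y'$ ($y,y',z\in Y$). Write $Y=C_1\sqcup\dots\sqcup C_m$ for the decomposition into conjugacy classes of $G$, with enumerations $C_i=\{y_{i,1},\dots,y_{i,n_i}\}$; $p_i$ is the least $p\ge1$ such that $y^p$ is central in $G$ for $y\in C_i$ (independent of $y\in C_i$). The canonical element of $G$ is $c=\prod_{i=1}^m\prod_{j=1}^{n_i}y_{i,j}^{p_i}$. *)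

From mathcomp Require Import all_boot.
From mathcomp Require Export monoid.

Set Implicit Arguments.
Unset Strict Implicit.
Unset Printing Implicit Defensive.

Global Open Scope group_scope.

Section CGroupDefs.
Variable G : groupType.

Definition central (x : G) : Prop := forall g : G, x * g = g * x.

Definition is_subgroup (S : G -> Prop) : Prop :=
  S 1 /\ (forall x z, S x -> S z -> S (x * z^-1)).

Definition in_generated (A : G -> Prop) (g : G) : Prop :=
  forall S : G -> Prop, is_subgroup S -> (forall x, A x -> S x) -> S g.

Definition in_commutator_subgroup (g : G) : Prop :=
  in_generated (fun c => exists x z : G, c = [~ x, z]) g.

Definition finite_subset (A : G -> Prop) : Prop :=
  exists s : seq G, forall g, A g -> g \in s.

(* (G, Y) with Y = { y i j } has a presentation with generators Y and
   defining relations z^-1 y z = y' (y, y', z in Y): Y generates G, and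
   G satisfies the universal property of the group presented by all the
   relations z^-1 y z = y' valid in G. *)
Definition conj_presentation (m : nat) (n : 'I_m -> nat)
    (y : forall i : 'I_m, 'I_(n i) -> G) : Prop :=
  (forall g : G, in_generated (fun x => exists i j, x = y i j) g) /\
  (forall (H : groupType) (f : G -> H),
      (forall i1 j1 i2 j2, f (y i1 j1 ^ y i2 j2) = f (y i1 j1) ^ f (y i2 j2)) ->
      exists phi : G -> H,
        (forall a b : G, phi (a * b) = phi a * phi b) /\
        (forall i j, phi (y i j) = f (y i j))).

Definition canonical_element (m : nat) (n : 'I_m -> nat)
    (y : forall i : 'I_m, 'I_(n i) -> G) (p : 'I_m -> nat) : G :=
  \prod_(i < m) \prod_(j < n i) (y i j ^+ p i).

End CGroupDefs.

(* All y_{i,j} of a class are conjugate and y_{i,j}^{p_i} is central, so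
   h_i := y_{i,j}^{p_i} does not depend on j.
   Every g in G can be collected as
   g * prod_i h_i^{v_i} = prod_i prod_j y_{i,j}^{e_{i,j}}:
   a letter multiplied on the right is pushed left past the later letters, which
   only conjugates them inside Y (this terminates because the exponent vector
   increases lexicographically), and y^-1 = y^{p-1} h^-1.  For each class i the
   presentation yields a homomorphism G -> Z counting the letters of class i; it
   kills [G,G], so sum_j e_{i,j} = v_i p_i there.  Reducing every e_{i,j} into
   (0, p_i] modulo p_i and absorbing the multiples of p_i into h_i gives the
   stated form, and since its exponents are bounded, [G,G] is finite. *)

From mathcomp Require Import all_boot.
From mathcomp Require Import monoid.
From mathcomp Require Import ssralg ssrint.
From mathcomp Require Import zify.

Set Implicit Arguments.
Unset Strict Implicit.
Unset Printing Implicit Defensive.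

Import GRing.Theory.

Section Central.
Variable G : groupType.
Implicit Types x g : G.

Lemma central1 : central (1 : G).
Proof. by move=> g; rewrite mul1g mulg1. Qed.

Lemma centralM x g : central x -> central g -> central (x * g).
Proof. by move=> cx cg a; apply/commute_sym/commuteM; apply/commute_sym. Qed.

Lemma centralV x : central x -> central x^-1.
Proof. by move=> cx a; apply/commute_sym/commuteV/commute_sym. Qed.

Lemma centralX x k : central x -> central (x ^+ k).
Proof. by move=> cx a; apply/commute_sym/commuteX/commute_sym. Qed.

Lemma central_prod (I : Type) (r : seq I) (F : I -> G) :
  (forall i, central (F i)) -> central (\prod_(i <- r) F i).
Proof. by move=> cF; apply: big_ind => //; [apply: central1 | apply: centralM]. Qed.

Lemma central_conj x g : central x -> x ^ g = x.
Proof. by move=> cx; rewrite conjgE cx mulKg. Qed.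

Lemma prodgV_central (I : eqType) (r : seq I) (C : I -> G) :
  (forall i, central (C i)) -> \prod_(i <- r) (C i)^-1 = (\prod_(i <- r) C i)^-1.
Proof.
move=> cC; apply: (mulIg (\prod_(i <- r) C i)); rewrite mulVg -prodgM_commute.
  by rewrite big1 // => i _; rewrite mulVg.
by move=> i j _ _; apply/centralV.
Qed.

End Central.

Lemma big_tagged (R : Type) (idx : R) (op : Monoid.law idx) (I : finType)
    (J : I -> finType) (F : {i : I & J i} -> R) :
  \big[op/idx]_(x : {i : I & J i}) F x =
  \big[op/idx]_(i : I) \big[op/idx]_(j : J i) F (Tagged J j).
Proof.
rewrite [index_enum _]unlock Finite.enum.unlock /tag_enum big_allpairs_dep.
by rewrite [index_enum I]unlock; apply: eq_bigr => i _; rewrite [index_enum _]unlock.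
Qed.

Lemma generated_ind_mulr (G : groupType) (A F : G -> Prop) :
  F 1 -> (forall a x, A x -> F a -> F (a * x) /\ F (a * x^-1)) ->
  forall g, in_generated A g -> F g.
Proof.
move=> F1 FA g /(_ (fun g => forall a, F a -> F (a * g) /\ F (a * g^-1))) Fg.
rewrite -[g]mul1g; apply: (Fg _ _ _ F1).1 => [|x /FA //].
split=> [a|x z Fx Fz a Fa]; first by rewrite invg1 mulg1.
rewrite invgM invgK !mulgA; split; first by apply: (Fz _ (Fx _ Fa).1).2.
by apply: (Fx _ (Fz _ Fa).1).2.
Qed.

Lemma finite_subset_image (G : groupType) (T : finType) (f : T -> G) (A : G -> Prop) :
  (forall g, A g -> exists x, g = f x) -> finite_subset A.
Proof. by move=> fA; exists (image f T) => g /fA[x ->]; apply: image_f. Qed.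

Lemma sum_weighted_le (E w : nat -> nat) a c B :
    (forall j, a <= j < c -> w j <= B) ->
  \sum_(a <= j < c) E j * w j <= (\sum_(a <= j < c) E j) * B.
Proof.
move=> wB; rewrite big_distrl /= big_nat_cond [X in _ <= X]big_nat_cond.
by apply: leq_sum => j /andP[/wB jB _]; rewrite leq_mul2l jB orbT.
Qed.

Section Collection.
Variables (G : groupType) (k : nat) (z : nat -> G).
Hypothesis conj_letter :
  forall j t, j < k -> t < k -> exists2 j', j' < k & z j ^ z t = z j'.

Definition word (s : seq nat) : G := \prod_(t <- s) z t.

Definition is_word (l : nat) (g : G) : Prop :=
  exists s, [/\ size s = l, all (fun t => t < k) s & g = word s].

Lemma is_word1 : is_word 0 1.
Proof. by exists [::]; rewrite /word big_nil. Qed.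

Lemma is_wordM l1 l2 g1 g2 : is_word l1 g1 -> is_word l2 g2 -> is_word (l1 + l2) (g1 * g2).
Proof.
case=> s1 [<- s1k ->] [s2 [<- s2k ->]]; exists (s1 ++ s2).
by rewrite size_cat all_cat s1k s2k /word big_cat.
Qed.

Lemma is_word_expg j e : j < k -> is_word e (z j ^+ e).
Proof.
move=> jk; elim: e => [|e IH]; first exact: is_word1.
rewrite expgS -add1n; apply: is_wordM IH.
by exists [:: j]; rewrite /word big_seq1 /= jk.
Qed.

Lemma is_word_prod (E : nat -> nat) a b : b <= k ->
  is_word (\sum_(a <= j < b) E j) (\prod_(a <= j < b) z j ^+ E j).
Proof.
move=> bk; rewrite [\sum_(a <= j < b) _]big_nat_cond [\prod_(a <= j < b) _]big_nat_cond.
elim/big_rec2: _ => [|j l g /andP[/andP[_ jb] _]]; first exact: is_word1.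
by apply: is_wordM; apply: is_word_expg; apply: leq_trans bk.
Qed.

Lemma is_word_conj l g t : t < k -> is_word l g -> is_word l (g ^ z t).
Proof.
move=> tk [s [<- sk ->]]; elim: s sk => [|j s IH] /=.
  by move=> _; rewrite /word big_nil conj1g; apply: is_word1.
case/andP=> jk sk; rewrite /word big_cons conjMg -add1n; apply: is_wordM (IH sk).
by have [j' j'k ->] := conj_letter jk tk; exists [:: j']; rewrite /word big_seq1 /= j'k.
Qed.

Definition collected (E : nat -> nat) : G := \prod_(0 <= j < k) z j ^+ E j.

Definition raise (E : nat -> nat) b j :=
  if j < b then E j else if j == b then (E b).+1 else 0.

Lemma big_raise (R : Type) (idx : R) (op : Monoid.law idx) (F : nat -> nat -> R) E b :
    b < k -> (forall j, F j 0 = idx) ->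
  \big[op/idx]_(0 <= j < k) F j (raise E b j) =
  op (\big[op/idx]_(0 <= j < b) F j (E j)) (F b (E b).+1).
Proof.
move=> bk F0; rewrite (big_cat_nat _ (n := b.+1)) //= big_nat_recr //=.
rewrite [X in op _ X]big1_seq ?Monoid.mulm1; last first.
  move=> j /andP[_]; rewrite mem_index_iota => /andP[bj _].
  by rewrite /raise ltnNge (ltnW bj) /= gtn_eqF.
rewrite /raise ltnn eqxx; congr (op _ _).
by apply: eq_big_nat => j /andP[_ ->].
Qed.

Lemma collected_mul_letter E b : b < k ->
  exists2 g, is_word (\sum_(b.+1 <= j < k) E j) g &
             collected E * z b = collected (raise E b) * g.
Proof.
move=> bk; set T := \prod_(b.+1 <= j < k) z j ^+ E j.
exists (T ^ z b); first exact/is_word_conj/is_word_prod.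
rewrite /collected (@big_raise _ _ _ (fun j e => z j ^+ e)) //.
rewrite (big_cat_nat _ (n := b.+1) (m := 0) (p := k)) //= big_nat_recr //= -/T.
by rewrite -[LHS]mulgA (conjgC T) expgSr !mulgA.
Qed.

(* The exponents E 0, ..., E (k-1), read as digits in base L.+1 (valid while their
   sum is at most L), so that [raise] increases the weight. *)
Definition lex_weight L (E : nat -> nat) := \sum_(0 <= j < k) E j * L.+1 ^ (k - j).

Lemma lex_weight_le L E : lex_weight L E <= (\sum_(0 <= j < k) E j) * L.+1 ^ k.
Proof. by apply: sum_weighted_le => j _; rewrite leq_pexp2l ?leq_subr. Qed.

Lemma lex_weight_raise L E b : b < k -> \sum_(0 <= j < k) E j <= L ->
  lex_weight L E < lex_weight L (raise E b).
Proof.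
move=> bk EL; rewrite /lex_weight (@big_raise _ _ _ (fun j e => e * L.+1 ^ (k - j))%N) //.
rewrite (big_cat_nat _ (n := b.+1) (m := 0) (p := k)) //= big_nat_recr //= -addnA ltn_add2l.
have tail_le : \sum_(b.+1 <= j < k) E j * L.+1 ^ (k - j)
               <= (\sum_(b.+1 <= j < k) E j) * L.+1 ^ (k - b.+1).
  by apply: sum_weighted_le => j /andP[bj _]; rewrite leq_pexp2l ?leq_sub2l.
have tail_sum : \sum_(b.+1 <= j < k) E j <= L.
  by apply: leq_trans EL; rewrite (big_cat_nat _ (n := b.+1) (m := 0) (p := k)) ?leq_addl //= ltnW.
have powS : (L.+1 ^ (k - b) = L.+1 * L.+1 ^ (k - b.+1))%N by rewrite -expnS subnSK.
have : ((\sum_(b.+1 <= j < k) E j) * L.+1 ^ (k - b.+1) < L.+1 ^ (k - b))%N.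
  by rewrite powS ltn_mul2r expn_gt0 ltnS.
rewrite mulSn; lia.
Qed.

Lemma collected_mul_word E s : all (fun t => t < k) s ->
  exists E', collected E * word s = collected E'.
Proof.
move Lsum: (\sum_(0 <= j < k) E j + size s) => L sk.
have [mu] := ubnP (L * L.+1 ^ k - lex_weight L E).
elim: mu E s Lsum sk => // mu IH E [|b s] Lsum /=.
  by exists E; rewrite /word big_nil mulg1.
case/andP=> bk sk weightL; have [_ [s1 [size_s1 s1k ->]] Eb] := collected_mul_letter E bk.
have sum_split : \sum_(0 <= j < k) E j =
    \sum_(0 <= j < b) E j + E b + \sum_(b.+1 <= j < k) E j.
  by rewrite (big_cat_nat _ (n := b.+1) (m := 0) (p := k)) //= big_nat_recr.
have sum_raise : \sum_(0 <= j < k) raise E b j = \sum_(0 <= j < b) E j + (E b).+1.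
  exact: (@big_raise _ _ _ (fun _ e => e)).
have EL : \sum_(0 <= j < k) E j <= L by rewrite -Lsum leq_addr.
have raiseL : \sum_(0 <= j < k) raise E b j + size (s1 ++ s) = L.
  by rewrite size_cat size_s1 sum_raise -Lsum sum_split /=; lia.
have raise_le : (\sum_(0 <= j < k) raise E b j) * L.+1 ^ k <= L * L.+1 ^ k.
  by rewrite leq_pmul2r ?expn_gt0 // -raiseL leq_addr.
have s1sk : all (fun t => t < k) (s1 ++ s) by rewrite all_cat s1k.
have weight_lt : L * L.+1 ^ k - lex_weight L (raise E b) < mu.
  by have := lex_weight_le L (raise E b); have := lex_weight_raise bk EL; lia.
have [E' E'eq] := IH _ _ raiseL s1sk weight_lt.
by exists E'; rewrite /word big_cons mulgA Eb -mulgA -big_cat.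
Qed.

End Collection.

Lemma prod_expg_mulr (G : groupType) (I : finType) (z : I -> G) :
    (forall x t, exists x', z x ^ z t = z x') ->
  forall (E : I -> nat) t, exists E', \prod_(x : I) z x ^+ E x * z t = \prod_(x : I) z x ^+ E' x.
Proof.
move=> conj_z E t; set s := enum I; pose zs j := z (nth t s j).
have nth_s x : nth t s (index x s) = x by rewrite nth_index ?mem_enum.
have index_s x : index x s < size s by rewrite index_mem mem_enum.
have prod_s (F : I -> nat) :
    \prod_(x : I) z x ^+ F x = collected (size s) zs (fun j => F (nth t s j)).
  by rewrite [index_enum I]unlock -enumT (big_nth t) /collected.
have conj_zs j l : j < size s -> l < size s -> exists2 j', j' < size s & zs j ^ zs l = zs j'.
  move=> _ _; have [x' ->] := conj_z (nth t s j) (nth t s l).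
  by exists (index x' s); rewrite /zs ?nth_s.
have ts : all (fun j => j < size s) [:: index t s] by rewrite /= index_s.
have [E' E'eq] := collected_mul_word conj_zs (fun j => E (nth t s j)) ts.
have zt : z t = zs (index t s) by rewrite /zs nth_s.
rewrite /word big_seq1 in E'eq; exists (fun x => E' (index x s)).
rewrite !prod_s zt E'eq; apply: eq_big_nat => j /andP[_ js].
by rewrite index_uniq ?enum_uniq.
Qed.

Section Degree.
Variables (G : groupType) (d : G -> int).
Hypothesis dM : {morph d : a b / a * b >-> (a + b)%R}.

Lemma degree1 : d 1 = 0%R.
Proof. by apply: (addrI (d 1)); rewrite -dM mulg1 addr0. Qed.

Lemma degreeV a : d a^-1 = (- d a)%R.
Proof. by apply: (addrI (d a)); rewrite -dM mulgV degree1 subrr. Qed.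

Lemma degreeX a e : d (a ^+ e) = (d a *+ e)%R.
Proof. by elim: e => [|e IH]; rewrite ?degree1 // expgS dM IH mulrS. Qed.

Lemma degree_prod (I : Type) (r : seq I) (F : I -> G) :
  d (\prod_(i <- r) F i) = (\sum_(i <- r) d (F i))%R.
Proof. exact: (big_morph d dM degree1). Qed.

Lemma degree_commutator_subgroup g : in_commutator_subgroup g -> d g = 0%R.
Proof.
move=> /(_ (fun g => d g = 0%R)); apply=> [|_ [a [b ->]]].
  by split=> [|a b da db]; rewrite ?degree1 // dM degreeV da db subrr.
by rewrite /commg /conjg !dM !degreeV; lia.
Qed.

End Degree.

Section ClassRegrouping.
Variables (G : groupType) (h : G) (p n : nat) (x : 'I_n -> G).
Hypotheses (h_central : central h) (p_gt0 : 0 < p) (n_gt0 : 0 < n).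
Hypothesis x_expp : forall j, x j ^+ p = h.

Lemma regroup_class (e : 'I_n -> nat) v : (\sum_(j < n) e j = v * p)%N ->
  exists k (a : 'I_n -> nat),
    [/\ k < n, forall j, 0 < a j <= p, (\sum_(j < n) a j + k * p = n * p)%N &
        \prod_(j < n) x j ^+ e j * (h ^+ v)^-1 = (h ^+ n)^-1 * (h ^+ k * \prod_(j < n) x j ^+ a j)].
Proof.
move=> sum_e.
(* a j is the representative of e j modulo p in (0, p]. *)
have /fin_all_exists[aq aqP] : forall j, exists aq : nat * nat,
    0 < aq.1 <= p /\ (e j + p = aq.1 + p * aq.2)%N.
  move=> j; exists (((e j + p.-1) %% p).+1, (e j + p.-1) %/ p).
  by rewrite /= ltn_pmod //; have := divn_eq (e j + p.-1) p; lia.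
pose a j := (aq j).1; pose q j := (aq j).2.
have commute_hX g l : commute g (h ^+ l) by apply/commute_sym/centralX.
have prod_eq : \prod_(j < n) x j ^+ e j * h ^+ n =
               \prod_(j < n) x j ^+ a j * h ^+ (\sum_(j < n) q j).
  rewrite -prodgXr -prodgM_commute; last by move=> *; apply: commute_hX.
  rewrite -[h ^+ n]iter_mulg_1 -big_const_ord -prodgM_commute; last first.
    by move=> *; apply/commute_sym/h_central.
  apply: eq_bigr => j _; have [_ ejp] := aqP j.
  by rewrite -{1}(x_expp j) -expgnDr ejp expgnDr expgnA x_expp.
have sum_eq : (\sum_(j < n) a j + p * \sum_(j < n) q j = v * p + n * p)%N.
  rewrite big_distrr -big_split /= -sum_e.
  rewrite (eq_bigr (fun j => e j + p)%N) => [|j _]; last by have [_ ->] := aqP j.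
  by rewrite big_split /= sum_nat_const card_ord.
have sum_a_ge : n <= \sum_(j < n) a j.
  by rewrite -[leqLHS]card_ord -sum1_card; apply: leq_sum => j _; have [/andP[]] := aqP j.
have sum_a_le : \sum_(j < n) a j <= n * p.
  by rewrite -[n in leqRHS]card_ord -sum_nat_const; apply: leq_sum => j _; have [/andP[]] := aqP j.
have v_le : v <= \sum_(j < n) q j.
  by rewrite -(leq_pmul2l p_gt0); nia.
exists (\sum_(j < n) q j - v), a; split.
- nia.
- by move=> j; have [] := aqP j.
- nia.
have hn_central : central (h ^+ n)^-1 by apply/centralV/centralX.
rewrite -(mulgK (h ^+ n) (\prod_(j < n) x j ^+ e j)) prod_eq -{1}(subnK v_le) expgnDr.
rewrite (hn_central (_ * _)) (centralX _ h_central (\prod_(j < n) _)) !mulgA.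
by rewrite -(mulgA _ (h ^+ v)) -(hn_central (h ^+ v)) !mulgA mulgK.
Qed.

End ClassRegrouping.

Lemma conjg_to_multiplicative (V : zmodType) (a b : GRing.to_multiplicative V) : a ^ b = a.
Proof. by rewrite conjgE [a * b]GRing.commuteT mulKg. Qed.

(* Under [Set Implicit Arguments] the index [i] of [y i j] would become implicit. *)
Unset Implicit Arguments.

Section CGroup.
Variables (G : groupType) (m : nat) (n : 'I_m -> nat).
Variables (y : forall i : 'I_m, 'I_(n i) -> G) (p : 'I_m -> nat).
Hypothesis n_gt0 : forall i, 0 < n i.
Hypothesis p_gt0 : forall i, 0 < p i.
Hypothesis conj_in_class : forall i j (g : G), exists j', y i j ^ g = y i j'.
Hypothesis class_conj :
  forall i1 j1 i2 j2, (exists g : G, y i2 j2 = y i1 j1 ^ g) <-> i1 = i2.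
Hypothesis expp_central : forall i j, central (y i j ^+ p i).

Definition class_power i := y i (Ordinal (n_gt0 i)) ^+ p i.

Lemma class_power_central i : central (class_power i).
Proof. exact: expp_central. Qed.

Lemma expp_class_power i j : y i j ^+ p i = class_power i.
Proof.
have [g ->] := (class_conj _ (Ordinal (n_gt0 i)) _ j).2 erefl.
by rewrite -conjXg central_conj ?class_power_central.
Qed.

Definition collected_form (e : forall i, 'I_(n i) -> nat) : G :=
  \prod_(i < m) \prod_(j < n i) y i j ^+ e i j.

Lemma collected_form_mulr e i j : exists e', collected_form e * y i j = collected_form e'.
Proof.
pose gen (u : {i : 'I_m & 'I_(n i)}) := y (tag u) (tagged u).
pose tag_of i (j : 'I_(n i)) := Tagged (fun i => 'I_(n i)) j.
have conj_gen u t : exists u', gen u ^ gen t = gen u'.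
  case: u => i1 j1; have [j' ->] := conj_in_class i1 j1 (gen t).
  by exists (tag_of i1 j').
have [E' E'eq] := prod_expg_mulr conj_gen (fun u => e (tag u) (tagged u)) (tag_of i j).
exists (fun i j => E' (tag_of i j)).
by move: E'eq; rewrite /collected_form !big_tagged.
Qed.

Lemma collected_form_mul_expg e i j k :
  exists e', collected_form e * y i j ^+ k = collected_form e'.
Proof.
elim: k e => [|k IH] e; first by exists e; rewrite mulg1.
have [e' e'E] := collected_form_mulr e i j.
by rewrite expgS mulgA e'E; apply: IH.
Qed.

Definition central_part (v : 'I_m -> nat) : G := \prod_(i < m) class_power i ^+ v i.

Lemma central_part_central v : central (central_part v).
Proof. by apply: central_prod => i; apply/centralX/class_power_central. Qed.

Lemma central_part_incr v i :
  central_part (fun l => v l + (l == i)) = central_part v * class_power i.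
Proof.
rewrite /central_part; under eq_bigr do rewrite expgnDr.
rewrite prodgM_commute; last by move=> l l' _ _; apply: centralX; apply: class_power_central.
congr (_ * _); rewrite (eq_bigr (fun l => if l == i then class_power l else 1)).
  by rewrite -big_mkcond big_pred1_eq.
by move=> l _; rewrite expgb.
Qed.

Hypothesis generated : forall g : G, in_generated (fun x => exists i j, x = y i j) g.

Lemma normal_form g : exists e v, g * central_part v = collected_form e.
Proof.
pose F a := exists e v, a * central_part v = collected_form e.
apply: (@generated_ind_mulr _ _ F _ _ g (generated g)).
  exists (fun _ _ => 0), (fun _ => 0); rewrite mul1g /central_part /collected_form.
  by rewrite !big1 // => i _; rewrite ?big1.
move=> a _ [i [j ->]] [e [v aE]]; split.
  have [e' e'E] := collected_form_mulr e i j.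
  by exists e', v; rewrite -mulgA -(central_part_central v (y i j)) mulgA aE.
have [e' e'E] := collected_form_mul_expg e i j (p i).-1.
exists e', (fun l => v l + (l == i)); rewrite central_part_incr -e'E -aE.
rewrite -(expp_class_power i j) -{1}(prednK (p_gt0 i)) expgS.
by rewrite (central_part_central v) !mulgA mulgVK -!mulgA (central_part_central v).
Qed.

Hypothesis presentation : forall (H : groupType) (f : G -> H),
  (forall i1 j1 i2 j2, f (y i1 j1 ^ y i2 j2) = f (y i1 j1) ^ f (y i2 j2)) ->
  exists phi : G -> H,
    (forall a b : G, phi (a * b) = phi a * phi b) /\ (forall i j, phi (y i j) = f (y i j)).

Lemma class_degree i0 : exists d : G -> int,
  {morph d : a b / a * b >-> (a + b)%R} /\ forall i j, d (y i j) = Posz (i == i0).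
Proof.
(* The defining relations z^-1 y z = y' stay inside a class, so the indicator of
   class i0 on Y extends to a homomorphism G -> Z. *)
pose f (g : G) : GRing.to_multiplicative int := Posz [exists j, g == y i0 j].
have f_y i j : f (y i j) = Posz (i == i0).
  rewrite /f; have [<- | ne] := eqVneq i i0.
    by have -> // : [exists j0, y i j == y i j0]; apply/existsP; exists j.
  case: existsP => // -[j' /eqP yij]; case/negP: ne; apply/eqP.
  by apply: (class_conj i j i0 j').1; exists 1; rewrite conjg1 yij.
have [|phi [phiM phi_y]] := presentation _ f.
  move=> i1 j1 i2 j2; rewrite conjg_to_multiplicative.
  by have [j' ->] := conj_in_class i1 j1 (y i2 j2); rewrite !f_y.
by exists phi; split=> // i j; rewrite phi_y f_y.
Qed.

Lemma class_exponent_balance g e v i0 :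
    in_commutator_subgroup g -> g * central_part v = collected_form e ->
  (\sum_(j < n i0) e i0 j = v i0 * p i0)%N.
Proof.
move=> gc ge; have [d [dM d_y]] := class_degree i0.
have := congr1 d ge; rewrite dM (degree_commutator_subgroup dM gc) add0r.
have pick (N : 'I_m -> nat) : (\sum_i Posz (i == i0) *+ N i)%R = Posz (N i0).
  rewrite (bigD1 i0) //= eqxx big1 ?addr0 ?natz // => i /negbTE ->; exact: mul0rn.
rewrite /central_part /collected_form !(degree_prod dM).
under eq_bigr do rewrite (degreeX dM) (degreeX dM) d_y -mulrnA.
under [X in _ = X]eq_bigr => i _ do rewrite (degree_prod dM).
under [X in _ = X]eq_bigr => i _ do under eq_bigr => j _ do rewrite (degreeX dM) d_y.
under [X in _ = X]eq_bigr => i _ do rewrite sumrMnr.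
by rewrite !pick => -[<-]; rewrite mulnC.
Qed.

Lemma canonical_elementE : canonical_element y p = \prod_(i < m) class_power i ^+ n i.
Proof.
apply: eq_bigr => i _; under eq_bigr do rewrite expp_class_power.
by rewrite big_const_ord iter_mulg_1.
Qed.

Definition commutator_form (k : 'I_m -> nat) (a : forall i, 'I_(n i) -> nat) : G :=
  (canonical_element y p)^-1 *
  \prod_(i < m) (y i (Ordinal (n_gt0 i)) ^+ (k i * p i) * \prod_(j < n i) y i j ^+ a i j).

Lemma commutator_subgroup_form g : in_commutator_subgroup g ->
  exists k a, [/\ forall i, k i < n i, forall i j, 0 < a i j <= p i,
    forall i, (\sum_(j < n i) a i j + k i * p i = n i * p i)%N & g = commutator_form k a].
Proof.
move=> gc; have [e [v ge]] := normal_form g.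
have /fin_all_exists[ka kaP] : forall i, exists ka : nat * ('I_(n i) -> nat),
    [/\ ka.1 < n i, forall j, 0 < ka.2 j <= p i,
       (\sum_(j < n i) ka.2 j + ka.1 * p i = n i * p i)%N &
       \prod_(j < n i) y i j ^+ e i j * (class_power i ^+ v i)^-1 =
       (class_power i ^+ n i)^-1 * (class_power i ^+ ka.1 * \prod_(j < n i) y i j ^+ ka.2 j)].
  move=> i; have [k [a ?]] := regroup_class (class_power_central i) (p_gt0 i) (n_gt0 i)
    (expp_class_power i) (class_exponent_balance g e v i gc ge).
  by exists (k, a).
exists (fun i => (ka i).1), (fun i => (ka i).2).
split=> [i | i | i |]; try by case: (kaP i).
have class_eq i := let: And4 _ _ _ eq_i := kaP i in eq_i.
have cpX_central i l : central (class_power i ^+ l) by apply/centralX/class_power_central.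
have -> : g = collected_form e * (central_part v)^-1 by rewrite -ge mulgK.
rewrite /collected_form /central_part -prodgV_central // -prodgM_commute; last first.
  by move=> i j _ _; apply/commute_sym/centralV.
under eq_bigr do rewrite class_eq.
rewrite prodgM_commute; last by move=> i j _ _; apply/centralV.
rewrite prodgV_central // /commutator_form canonical_elementE; congr (_ * _).
by apply: eq_bigr => i _; rewrite /class_power -expgnA mulnC.
Qed.

Lemma commutator_subgroup_finite : finite_subset (@in_commutator_subgroup G).
Proof.
pose T := ({dffun forall i : 'I_m, 'I_(n i)} *
           {dffun forall i : 'I_m, {ffun 'I_(n i) -> 'I_(p i).+1}})%type.
pose form_of (ka : T) := commutator_form (fun i => ka.1 i) (fun i j => ka.2 i j).
apply: (@finite_subset_image _ T form_of).
move=> g /commutator_subgroup_form[k [a [kn ap _ ->]]].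
have ap' i j : a i j < (p i).+1 by rewrite ltnS; case/andP: (ap i j).
exists ([ffun i => Ordinal (kn i)], [ffun i => [ffun j => Ordinal (ap' i j)]]).
rewrite /commutator_form; congr (_ * _); apply: eq_bigr => i _; rewrite !ffunE /=.
by congr (_ * _); apply: eq_bigr => j _; rewrite ffunE.
Qed.

End CGroup.

Theorem proposition2p5 (G : groupType) (m : nat) (n : 'I_m -> nat)
    (y : forall i : 'I_m, 'I_(n i) -> G) (p : 'I_m -> nat)
    (* each class C_i = {y_{i,1},...,y_{i,n_i}} is nonempty *)
    (Hn : forall i, 0 < n i)
    (* the enumeration is injective *)
    (Hinj : forall i1 j1 i2 j2, y i1 j1 = y i2 j2 ->
              i1 = i2 /\ nat_of_ord j1 = nat_of_ord j2)
    (* 1 is not in Y *)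
    (H1 : forall i j, y i j <> 1)
    (* Y is conjugation invariant, each C_i is closed under conjugation *)
    (Hconj : forall i j (g : G), exists j', y i j ^ g = y i j')
    (* elements of C_i1 and C_i2 are conjugate in G iff i1 = i2 *)
    (Hclass : forall i1 j1 i2 j2,
              (exists g : G, y i2 j2 = y i1 j1 ^ g) <-> i1 = i2)
    (* (G, Y) is a C-group *)
    (HC : conj_presentation y)
    (* p_i is the least p >= 1 with y^p central, for y in C_i *)
    (Hp : forall i j, 0 < p i /\ central (y i j ^+ p i) /\
              (forall q, 0 < q -> q < p i -> ~ central (y i j ^+ q))) :
  finite_subset (@in_commutator_subgroup G) /\
  forall g : G, in_commutator_subgroup g ->
    exists (k : 'I_m -> nat) (a : forall i : 'I_m, 'I_(n i) -> nat),
      (forall i, k i < n i) /\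
      (forall i j, 0 < a i j /\ a i j <= p i) /\
      (forall i, (\sum_(j < n i) a i j + k i * p i = n i * p i)%N) /\
      g = (canonical_element y p)^-1 *
          \prod_(i < m) (y i (Ordinal (Hn i)) ^+ (k i * p i) *
                         \prod_(j < n i) y i j ^+ a i j).
Proof.
have p_gt0 i : 0 < p i := (Hp i (Ordinal (Hn i))).1.
have expp_central i j : central (y i j ^+ p i) := (Hp i j).2.1.
have [generated presentation] := HC.
split; first exact: (commutator_subgroup_finite _ _ _ _ _ Hn p_gt0 Hconj Hclass
                       expp_central generated presentation).
move=> g /(commutator_subgroup_form _ _ _ _ _ Hn p_gt0 Hconj Hclass
            expp_central generated presentation)[k [a [kn ap sum_ka ->]]].
by exists k, a; split=> //; split=> [i j|//]; apply/andP.
Qed.
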